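(* Let $M\subset\mathbb{R}^2$ be open with coordinates $(x,u)$, let $M^{(1)}$ be the first-order jet space with coordinates $(x,u,u_x)$, and consider the ODE $u_{xx}=\phi(x,u,u_x)$ with associated vector field $\mathbf{A}=\partial_x+u_x\partial_u+\phi\,\partial_{u_x}$. Let $(\partial_u,\lambda_1)$ and $(\partial_u,\lambda_2)$ be the canonical representatives of two non-equivalent generalized $\mathcal{C}^\infty$-symmetries of this ODE (so $\lambda_1\neq\lambda_2$), put $\mathbf{X}_i=\partial_u+\lambda_i\partial_{u_x}$ ($i=1,2$) and $$\rho=\frac{\mathbf{X}_1(\lambda_2)-\mathbf{X}_2(\lambda_1)}{\lambda_1-\lambda_2}.$$ If $f_1=f_1(x,u,u_x)$ and $f_2=f_2(x,u,u_x)$ are functions such that $$\frac{\mathbf{X}_1(f_2)}{f_2}=\frac{\mathbf{X}_2(f_1)}{f_1}=\rho,$$ then $$[f_1\mathbf{X}_1,\mathbf{A}]=\rho_1 (f_1\mathbf{X}_1),\qquad [f_2\mathbf{X}_2,\mathbf{A}]=\rho_2 (f_2\mathbf{X}_2),\qquad [f_1\mathbf{X}_1,f_2\mathbf{X}_2]=0,$$ where $\rho_i=\lambda_i-\mathbf{A}(f_i)/f_i$ for $i=1,2$.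
   Context: All functions are smooth on $M^{(1)}$ and all statements are local, on an open set where the functions appearing in denominators ($\lambda_1-\lambda_2$, $f_1$, $f_2$) do not vanish. For smooth $\xi,\eta,\lambda$ on $M^{(1)}$ and $\mathbf{v}=\xi\partial_x+\eta\partial_u$, the $\lambda$-prolongation is $\mathbf{v}^{[\lambda,(1)]}=\mathbf{v}+\big((\mathbf{A}+\lambda)(\eta)-(\mathbf{A}+\lambda)(\xi)u_x\big)\partial_{u_x}$. The pair $(\mathbf{v},\lambda)$ is a generalized $\mathcal{C}^\infty$-symmetry (generalized $\lambda$-symmetry) of the ODE if $[\mathbf{v}^{[\lambda,(1)]},\mathbf{A}]=\lambda\,\mathbf{v}^{[\lambda,(1)]}+\mu\mathbf{A}$ with $\mu=-(\mathbf{A}+\lambda)(\xi)$. Two generalized $\mathcal{C}^\infty$-symmetries $(\mathbf{v}_1,\lambda_1)$, $(\mathbf{v}_2,\lambda_2)$ are $\mathbf{A}$-equivalent if $\{\mathbf{A},\mathbf{v}_1^{[\lambda_1,(1)]},\mathbf{v}_2^{[\lambda_2,(1)]}\}$ is linearly dependent over $C^\infty(M^{(1)})$. If $Q=\eta-\xi u_x$ is the characteristic of $\mathbf{v}$, the canonical representative of the equivalence class of $(\mathbf{v},\lambda)$ is the pair $(\partial_u,\lambda+\mathbf{A}(Q)/Q)$; in particular $(\partial_u,\lambda)$ is a generalized $\mathcal{C}^\infty$-symmetry iff $[\partial_u+\lambda\partial_{u_x},\mathbf{A}]=\lambda(\partial_u+\lambda\partial_{u_x})$. *)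

From Stdlib Require Import Reals.
From Coquelicot Require Import Coquelicot.
Open Scope R_scope.

(* Points of the jet space M^(1) : (x, u, u_x) = ((x,u),p). *)
Definition pt := (R * R * R)%type.
Definition fn := pt -> R.

Definition px (q : pt) : R := fst (fst q).
Definition pu (q : pt) : R := snd (fst q).
Definition pp (q : pt) : R := snd q.

Definition dx (g : fn) : fn := fun q => Derive (fun t => g (t, pu q, pp q)) (px q).
Definition du (g : fn) : fn := fun q => Derive (fun t => g (px q, t, pp q)) (pu q).
Definition dp (g : fn) : fn := fun q => Derive (fun t => g (px q, pu q, t)) (pp q).

Fixpoint Ck (k : nat) (U : pt -> Prop) (g : fn) : Prop :=
  (forall q, U q -> continuous g q) /\
  match k with
  | O => True
  | S k' =>
      (forall q, U q ->
         ex_derive (fun t => g (t, pu q, pp q)) (px q) /\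
         ex_derive (fun t => g (px q, t, pp q)) (pu q) /\
         ex_derive (fun t => g (px q, pu q, t)) (pp q)) /\
      Ck k' U (dx g) /\ Ck k' U (du g) /\ Ck k' U (dp g)
  end.

Definition smooth_on (U : pt -> Prop) (g : fn) : Prop := forall k, Ck k U g.

Record VF := mkVF { cx : fn; cu : fn; cp : fn }.

Definition vapp (V : VF) (g : fn) : fn :=
  fun q => cx V q * dx g q + cu V q * du g q + cp V q * dp g q.

Definition bracket (V W : VF) : VF :=
  mkVF (fun q => vapp V (cx W) q - vapp W (cx V) q)
       (fun q => vapp V (cu W) q - vapp W (cu V) q)
       (fun q => vapp V (cp W) q - vapp W (cp V) q).

Definition vscale (f : fn) (V : VF) : VF :=
  mkVF (fun q => f q * cx V q) (fun q => f q * cu V q) (fun q => f q * cp V q).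

Definition vadd (V W : VF) : VF :=
  mkVF (fun q => cx V q + cx W q) (fun q => cu V q + cu W q)
       (fun q => cp V q + cp W q).

Definition vzero : VF := mkVF (fun _ => 0) (fun _ => 0) (fun _ => 0).

Definition vf_eq_on (U : pt -> Prop) (V W : VF) : Prop :=
  forall q, U q -> cx V q = cx W q /\ cu V q = cu W q /\ cp V q = cp W q.

Definition Avf (phi : fn) : VF := mkVF (fun _ => 1) pp phi.

Definition Aplus (phi lam g : fn) : fn := fun q => vapp (Avf phi) g q + lam q * g q.

Definition lprol (phi xi eta lam : fn) : VF :=
  mkVF xi eta (fun q => Aplus phi lam eta q - Aplus phi lam xi q * pp q).

Definition gen_sym (U : pt -> Prop) (phi xi eta lam : fn) : Prop :=
  vf_eq_on U (bracket (lprol phi xi eta lam) (Avf phi))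
    (vadd (vscale lam (lprol phi xi eta lam))
          (vscale (fun q => - Aplus phi lam xi q) (Avf phi))).

Definition A_equiv (U : pt -> Prop) (phi xi1 eta1 lam1 xi2 eta2 lam2 : fn) : Prop :=
  exists a b c : fn,
    smooth_on U a /\ smooth_on U b /\ smooth_on U c /\
    (exists q, U q /\ (a q <> 0 \/ b q <> 0 \/ c q <> 0)) /\
    vf_eq_on U (vadd (vscale a (Avf phi))
                  (vadd (vscale b (lprol phi xi1 eta1 lam1))
                        (vscale c (lprol phi xi2 eta2 lam2)))) vzero.

Definition fzero : fn := fun _ => 0.
Definition fone : fn := fun _ => 1.

Definition Xvf (lam : fn) : VF := mkVF fzero fone lam.

(* For X_i = d_u + lam_i d_p, the symmetry condition reads [X_i, A] = lam_i X_i, and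
   [X_1, X_2] = (X_1(lam_2) - X_2(lam_1)) d_p = rho (X_1 - X_2).  Everything then follows
   from the scaling rule [f V, g W] = f g [V, W] + f V(g) W - g W(f) V:
   rescaling X_i by f_i shifts its eigenvalue by -A(f_i)/f_i, and the hypotheses
   X_1(f_2)/f_2 = X_2(f_1)/f_1 = rho make the three terms of [f_1 X_1, f_2 X_2] cancel. *)
From Stdlib Require Import Reals.
From Coquelicot Require Import Coquelicot.
Open Scope R_scope.

Definition derivable_at (g : fn) (q : pt) : Prop :=
  ex_derive (fun t => g (t, pu q, pp q)) (px q) /\
  ex_derive (fun t => g (px q, t, pp q)) (pu q) /\
  ex_derive (fun t => g (px q, pu q, t)) (pp q).

Definition vf_derivable_at (V : VF) (q : pt) : Prop :=
  derivable_at (cx V) q /\ derivable_at (cu V) q /\ derivable_at (cp V) q.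

Definition vf_eq_at (q : pt) (V W : VF) : Prop :=
  cx V q = cx W q /\ cu V q = cu W q /\ cp V q = cp W q.

Lemma vf_eq_at_refl q V : vf_eq_at q V V.
Proof. split; [|split]; reflexivity. Qed.

Lemma smooth_derivable_at U g q : smooth_on U g -> U q -> derivable_at g q.
Proof. intros S Uq; destruct (S 1%nat) as [_ [D _]]; exact (D q Uq). Qed.

Lemma derivable_at_const c q : derivable_at (fun _ => c) q.
Proof. split; [|split]; apply ex_derive_const. Qed.

Lemma vf_derivable_Xvf lam q : derivable_at lam q -> vf_derivable_at (Xvf lam) q.
Proof.
  intros D; unfold vf_derivable_at; simpl; unfold fzero, fone.
  split; [|split]; [apply derivable_at_const.. | exact D].
Qed.

Lemma vapp_congr V V' g h q : vf_eq_at q V V' -> (forall q', g q' = h q') ->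
  vapp V g q = vapp V' h q.
Proof.
  intros (Ex & Eu & Ep) E; unfold vapp, dx, du, dp.
  rewrite Ex, Eu, Ep, !(Derive_ext _ _ _ (fun t => E _)); reflexivity.
Qed.

Lemma vapp_const V c q : vapp V (fun _ => c) q = 0.
Proof. unfold vapp, dx, du, dp; rewrite !Derive_const; ring. Qed.

Lemma vapp_scale f V g q : vapp (vscale f V) g q = f q * vapp V g q.
Proof. unfold vapp; simpl; ring. Qed.

Lemma vapp_mul V g h q : derivable_at g q -> derivable_at h q ->
  vapp V (fun q' => g q' * h q') q = vapp V g q * h q + g q * vapp V h q.
Proof.
  destruct q as [[a b] c]; intros (gx & gu & gp) (hx & hu & hp).
  unfold vapp, dx, du, dp, px, pu, pp in *; simpl in *.
  rewrite !Derive_mult by assumption; ring.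
Qed.

Lemma bracket_ext V V' W W' q :
  (forall q', vf_eq_at q' V V') -> (forall q', vf_eq_at q' W W') ->
  vf_eq_at q (bracket V W) (bracket V' W').
Proof.
  intros EV EW; unfold vf_eq_at; simpl.
  split; [|split]; f_equal; apply vapp_congr; auto; intros q'; apply EV || apply EW.
Qed.

Lemma bracket_scalel f V W q : derivable_at f q -> vf_derivable_at V q ->
  vf_eq_at q (bracket (vscale f V) W)
    (vadd (vscale f (bracket V W)) (vscale (fun q' => - vapp W f q') V)).
Proof.
  intros Df (Dx & Du & Dp); unfold vf_eq_at; cbn [bracket vadd vscale cx cu cp].
  rewrite !vapp_scale, !vapp_mul by assumption.
  split; [|split]; ring.
Qed.

Lemma bracket_scale f g V W q :
  derivable_at f q -> derivable_at g q -> vf_derivable_at V q -> vf_derivable_at W q ->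
  vf_eq_at q (bracket (vscale f V) (vscale g W))
    (vadd (vscale (fun q' => f q' * g q') (bracket V W))
          (vadd (vscale (fun q' => f q' * vapp V g q') W)
                (vscale (fun q' => - (g q' * vapp W f q')) V))).
Proof.
  intros Df Dg (Vx & Vu & Vp) (Wx & Wu & Wp).
  unfold vf_eq_at; cbn [bracket vadd vscale cx cu cp].
  rewrite !vapp_scale, !vapp_mul by assumption.
  split; [|split]; ring.
Qed.

Lemma bracket_scalel_eigen f V W c q :
  derivable_at f q -> vf_derivable_at V q -> f q <> 0 ->
  vf_eq_at q (bracket V W) (vscale c V) ->
  vf_eq_at q (bracket (vscale f V) W)
    (vscale (fun q' => c q' - vapp W f q' / f q') (vscale f V)).
Proof.
  intros Df DV f0 (Bx & Bu & Bp).
  destruct (bracket_scalel f V W q Df DV) as (Ex & Eu & Ep).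
  unfold vf_eq_at in *; cbn [vadd vscale cx cu cp] in *.
  rewrite Ex, Eu, Ep, Bx, Bu, Bp.
  split; [|split]; field; exact f0.
Qed.

Lemma bracket_scale_commute f g V W r q :
  derivable_at f q -> derivable_at g q -> vf_derivable_at V q -> vf_derivable_at W q ->
  f q <> 0 -> g q <> 0 ->
  vf_eq_at q (bracket V W) (vadd (vscale r V) (vscale (fun q' => - r q') W)) ->
  vapp V g q / g q = r q -> vapp W f q / f q = r q ->
  vf_eq_at q (bracket (vscale f V) (vscale g W)) vzero.
Proof.
  intros Df Dg DV DW f0 g0 (Bx & Bu & Bp) Vg Wf.
  assert (Vg' : vapp V g q = r q * g q) by (rewrite <- Vg; field; exact g0).
  assert (Wf' : vapp W f q = r q * f q) by (rewrite <- Wf; field; exact f0).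
  destruct (bracket_scale f g V W q Df Dg DV DW) as (Ex & Eu & Ep).
  unfold vf_eq_at in *; cbn [vadd vscale vzero cx cu cp] in *.
  rewrite Ex, Eu, Ep, Bx, Bu, Bp, Vg', Wf'.
  split; [|split]; ring.
Qed.

Lemma lprol_canonical phi lam q : vf_eq_at q (lprol phi fzero fone lam) (Xvf lam).
Proof.
  unfold vf_eq_at, lprol, Aplus; cbn [cx cu cp Xvf]; unfold fzero, fone.
  rewrite !vapp_const.
  split; [|split]; ring.
Qed.

Lemma gen_sym_canonical U phi lam q : gen_sym U phi fzero fone lam -> U q ->
  vf_eq_at q (bracket (Xvf lam) (Avf phi)) (vscale lam (Xvf lam)).
Proof.
  intros G Uq.
  destruct (bracket_ext _ (Xvf lam) _ (Avf phi) q
              (lprol_canonical phi lam) (fun q' => vf_eq_at_refl q' _)) as (Ex & Eu & Ep).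
  destruct (G q Uq) as (Gx & Gu & Gp).
  destruct (lprol_canonical phi lam q) as (Lx & Lu & Lp).
  assert (A0 : Aplus phi lam fzero q = 0)
    by (unfold Aplus, fzero; rewrite vapp_const; ring).
  unfold vf_eq_at in *; cbn [vadd vscale cx cu cp Avf] in *.
  rewrite <- Ex, <- Eu, <- Ep, Gx, Gu, Gp, Lx, Lu, Lp, A0.
  split; [|split]; ring.
Qed.

Definition bracket_ratio (lam1 lam2 : fn) : fn := fun q =>
  (vapp (Xvf lam1) lam2 q - vapp (Xvf lam2) lam1 q) / (lam1 q - lam2 q).

Lemma bracket_Xvf lam1 lam2 q : lam1 q - lam2 q <> 0 ->
  vf_eq_at q (bracket (Xvf lam1) (Xvf lam2))
    (vadd (vscale (bracket_ratio lam1 lam2) (Xvf lam1))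
          (vscale (fun q' => - bracket_ratio lam1 lam2 q') (Xvf lam2))).
Proof.
  intros d12; unfold vf_eq_at, bracket_ratio.
  cbn [bracket vadd vscale cx cu cp Xvf]; unfold fzero, fone.
  rewrite !vapp_const.
  split; [|split]; field; exact d12.
Qed.

Theorem lemma1 (U : pt -> Prop) (phi lam1 lam2 f1 f2 : fn) :
  open U ->
  smooth_on U phi -> smooth_on U lam1 -> smooth_on U lam2 ->
  smooth_on U f1 -> smooth_on U f2 ->
  gen_sym U phi fzero fone lam1 ->
  gen_sym U phi fzero fone lam2 ->
  ~ A_equiv U phi fzero fone lam1 fzero fone lam2 ->
  (forall q, U q -> lam1 q - lam2 q <> 0 /\ f1 q <> 0 /\ f2 q <> 0) ->
  let rho : fn := fun q =>
    (vapp (Xvf lam1) lam2 q - vapp (Xvf lam2) lam1 q) / (lam1 q - lam2 q) in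
  (forall q, U q -> vapp (Xvf lam1) f2 q / f2 q = rho q) ->
  (forall q, U q -> vapp (Xvf lam2) f1 q / f1 q = rho q) ->
  let rho1 : fn := fun q => lam1 q - vapp (Avf phi) f1 q / f1 q in
  let rho2 : fn := fun q => lam2 q - vapp (Avf phi) f2 q / f2 q in
  vf_eq_on U (bracket (vscale f1 (Xvf lam1)) (Avf phi))
             (vscale rho1 (vscale f1 (Xvf lam1))) /\
  vf_eq_on U (bracket (vscale f2 (Xvf lam2)) (Avf phi))
             (vscale rho2 (vscale f2 (Xvf lam2))) /\
  vf_eq_on U (bracket (vscale f1 (Xvf lam1)) (vscale f2 (Xvf lam2))) vzero.
Proof.
  (* Non-equivalence enters only through lam1 <> lam2, which is assumed pointwise. *)
  intros _ _ Sl1 Sl2 Sf1 Sf2 G1 G2 _ Hne rho X1f2 X2f1 rho1 rho2.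
  split; [|split]; intros q Uq; destruct (Hne q Uq) as (d12 & f1q & f2q).
  - apply bracket_scalel_eigen; eauto using smooth_derivable_at, vf_derivable_Xvf.
    exact (gen_sym_canonical U phi lam1 q G1 Uq).
  - apply bracket_scalel_eigen; eauto using smooth_derivable_at, vf_derivable_Xvf.
    exact (gen_sym_canonical U phi lam2 q G2 Uq).
  - apply (bracket_scale_commute f1 f2 (Xvf lam1) (Xvf lam2) rho);
      eauto using smooth_derivable_at, vf_derivable_Xvf.
    exact (bracket_Xvf lam1 lam2 q d12).
Qed.
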